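(* Let $X$ be a finite q-cycle set and $x\in X$. Let $C_x:=\bigcup_{n}\mathcal{C}_n$, where $\mathcal{C}_0:=\{x\}$ and $\mathcal{C}_n:=\mathcal{C}_{n-1}\cup\{\sigma_a(b):a,b\in\mathcal{C}_{n-1}\}\cup\{\delta_a(b):a,b\in\mathcal{C}_{n-1}\}$ for $n\ge1$. Then $C_x$ is an indecomposable q-cycle set.
   Context: A q-cycle set is a non-empty set $X$ with operations $\cdot,:$ such that each $\sigma_x:y\mapsto x\cdot y$ is bijective and $(x\cdot y)\cdot(x\cdot z)=(y:x)\cdot(y\cdot z)$, $(x:y):(x:z)=(y\cdot x):(y:z)$, $(x\cdot y):(x\cdot z)=(y:x)\cdot(y:z)$ for all $x,y,z$; $\delta_x(y):=x:y$. A sub-q-cycle set is a subset that is a q-cycle set under the restricted operations. A q-cycle set is indecomposable if it admits no partition into two nonempty sub-q-cycle sets (for finite ones, equivalently the group generated by all $\sigma_y,\delta_y$ acts transitively). *)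

From mathcomp Require Import all_boot.
Set Implicit Arguments. Unset Strict Implicit. Unset Printing Implicit Defensive.

Section QCycle.
Variables (X : finType) (dot colon : X -> X -> X).

Definition qcycle_set : Prop :=
  (forall x, bijective (dot x)) /\
  (forall x y z, dot (dot x y) (dot x z) = dot (colon y x) (dot y z)) /\
  (forall x y z, colon (colon x y) (colon x z) = colon (dot y x) (colon y z)) /\
  (forall x y z, colon (dot x y) (dot x z) = dot (colon y x) (colon y z)).

Definition sub_qcycle_set (Y : X -> Prop) : Prop :=
  (exists y, Y y) /\
  (forall a b, Y a -> Y b -> Y (dot a b)) /\
  (forall a b, Y a -> Y b -> Y (colon a b)) /\
  (forall y, Y y ->
     (forall a b, Y a -> Y b -> dot y a = dot y b -> a = b) /\
     (forall b, Y b -> exists2 a, Y a & dot y a = b)) /\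
  (forall x y z, Y x -> Y y -> Y z ->
     dot (dot x y) (dot x z) = dot (colon y x) (dot y z)) /\
  (forall x y z, Y x -> Y y -> Y z ->
     colon (colon x y) (colon x z) = colon (dot y x) (colon y z)) /\
  (forall x y z, Y x -> Y y -> Y z ->
     colon (dot x y) (dot x z) = dot (colon y x) (colon y z)).

Definition indecomposable_sub (Y : X -> Prop) : Prop :=
  sub_qcycle_set Y /\
  ~ (exists A B : X -> Prop,
        (forall z, Y z <-> A z \/ B z) /\
        (forall z, ~ (A z /\ B z)) /\
        sub_qcycle_set A /\ sub_qcycle_set B).

Fixpoint Cseq (x : X) (n : nat) : {set X} :=
  match n with
  | 0 => [set x]
  | n'.+1 => let C := Cseq x n' in
      C :|: [set dot a b | a in C, b in C] :|: [set colon a b | a in C, b in C]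
  end.

Definition Cx (x : X) : X -> Prop := fun y => exists n, y \in Cseq x n.

End QCycle.

(* C_x is the least subset of X containing x and closed under both operations.
   Such a closed subset is automatically a sub-q-cycle set: the identities are
   inherited, and each sigma_y restricts to a bijection of it because on a finite
   set the inverse of the injection sigma_y is one of its iterates.  Conversely
   any sub-q-cycle set containing x is closed, hence contains all of C_x; so in a
   partition of C_x into two sub-q-cycle sets the block containing x is
   everything and the other block is empty. *)

From mathcomp Require Import all_boot.

Set Implicit Arguments.
Unset Strict Implicit.

Lemma finv_closed (T : finType) (f : T -> T) (P : T -> Prop) :
  (forall y, P y -> P (f y)) -> forall y, P y -> P (finv f y).
Proof. by move=> Pf y Py; rewrite /finv; elim: (order f y).-1 => //= n; apply: Pf. Qed.

Lemma closed_inj_surj (T : finType) (f : T -> T) (P : T -> Prop) :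
  injective f -> (forall y, P y -> P (f y)) ->
  forall b, P b -> exists2 a, P a & f a = b.
Proof. by move=> f_inj Pf b Pb; exists (finv f b); [exact: finv_closed | exact: f_finv]. Qed.

Section Closure.
Variables (X : finType) (dot colon : X -> X -> X).

Lemma closed_sub_qcycle_set (Y : X -> Prop) :
  qcycle_set dot colon -> (exists y, Y y) ->
  (forall a b, Y a -> Y b -> Y (dot a b)) ->
  (forall a b, Y a -> Y b -> Y (colon a b)) ->
  sub_qcycle_set dot colon Y.
Proof.
move=> [dot_bij [id1 [id2 id3]]] Y0 Ydot Ycolon.
do 3!split=> //; split; last by split; [|split]=> *; [apply: id1 | apply: id2 | apply: id3].
move=> y Yy; have dot_inj := bij_inj (dot_bij y).
split; first by move=> a b _ _; apply: dot_inj.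
by apply: closed_inj_surj dot_inj _ => b; apply: Ydot.
Qed.

Variable x : X.

Lemma Cseq_subS n : Cseq dot colon x n \subset Cseq dot colon x n.+1.
Proof. by apply/subsetP => y Cy; rewrite /= !in_setU Cy. Qed.

Lemma Cseq_monotone : {homo Cseq dot colon x : m n / m <= n >-> m \subset n}.
Proof. by apply: homo_leq => [//|B A C|]; [exact: subset_trans | exact: Cseq_subS]. Qed.

Lemma Cx_common a b :
  Cx dot colon x a -> Cx dot colon x b ->
  exists n, (a \in Cseq dot colon x n) && (b \in Cseq dot colon x n).
Proof.
move=> [m Ca] [n Cb]; exists (maxn m n).
by rewrite (subsetP (Cseq_monotone (leq_maxl m n))) ?(subsetP (Cseq_monotone (leq_maxr m n))).
Qed.

Lemma Cx_dot a b : Cx dot colon x a -> Cx dot colon x b -> Cx dot colon x (dot a b).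
Proof.
move=> Ca Cb; have [n /andP [Cna Cnb]] := Cx_common Ca Cb.
by exists n.+1; rewrite /= !in_setU imset2_f ?orbT.
Qed.

Lemma Cx_colon a b : Cx dot colon x a -> Cx dot colon x b -> Cx dot colon x (colon a b).
Proof.
move=> Ca Cb; have [n /andP [Cna Cnb]] := Cx_common Ca Cb.
by exists n.+1; rewrite /= !in_setU imset2_f ?orbT.
Qed.

Lemma Cx_least (P : X -> Prop) :
  P x -> (forall a b, P a -> P b -> P (dot a b)) ->
  (forall a b, P a -> P b -> P (colon a b)) ->
  forall y, Cx dot colon x y -> P y.
Proof.
move=> Px Pdot Pcolon y [n]; elim: n y => [|n IH] y /=; first by move/set1P->.
rewrite !in_setU => /orP [/orP [/IH //|] |] /imset2P [a b Ca Cb ->].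
- by apply: Pdot; apply: IH.
- by apply: Pcolon; apply: IH.
Qed.

Lemma sub_qcycle_set_Cx (A : X -> Prop) :
  sub_qcycle_set dot colon A -> A x -> forall y, Cx dot colon x y -> A y.
Proof. by move=> [_ [Adot [Acolon _]]] Ax; apply: Cx_least. Qed.

Lemma Cx_block_empty (A B : X -> Prop) :
  sub_qcycle_set dot colon A -> A x ->
  (forall z, B z -> Cx dot colon x z) -> (forall z, ~ (A z /\ B z)) ->
  forall z, ~ B z.
Proof.
move=> subA Ax BCx AB_disj z Bz; apply: (AB_disj z); split=> //.
exact: sub_qcycle_set_Cx (BCx z Bz).
Qed.

End Closure.

Theorem mainTheorem11 (X : finType) (dot colon : X -> X -> X) (x : X) :
  qcycle_set dot colon ->
  indecomposable_sub dot colon (Cx dot colon x).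
Proof.
move=> qcX; have Cxx : Cx dot colon x x by exists 0; rewrite /= inE.
split.
  exact: closed_sub_qcycle_set (ex_intro _ x Cxx) (@Cx_dot _ _ _ x) (@Cx_colon _ _ _ x).
move=> [A [B [CxAB [AB_disj [subA subB]]]]].
have [[a Aa] _] := subA; have [[b Bb] _] := subB.
have [Ax|Bx] : A x \/ B x by apply/CxAB.
- by apply: (Cx_block_empty subA Ax _ AB_disj Bb) => z Bz; apply/CxAB; right.
- apply: (Cx_block_empty subB Bx _ _ Aa) => [z Az|z [Bz Az]]; last exact: (AB_disj z).
  by apply/CxAB; left.
Qed.
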